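(* Suppose there exists an $[n,k_0]$ code $C_0$ over $\mathbb{F}_q$ with $d(C_0^\perp)=\delta\ge 3$. If $C$ is an $[n,k]$ code over $\mathbb{F}_q$ with $d(C^\perp)=\delta$ and $k>k_0$, then $\gamma(C)\le k-d(C^\perp)+2$.
   Context: An $[n,k]$ code over $\mathbb{F}_q$ is a $k$-dimensional subspace $C\subseteq\mathbb{F}_q^n$; write $E=\{1,\dots,n\}$. For $\bm{x}\in\mathbb{F}_q^n$, $\mathrm{supp}(\bm{x})=\{i: x_i\neq 0\}$ and the weight is $|\mathrm{supp}(\bm{x})|$; for $B\subseteq\mathbb{F}_q^n$, $\mathrm{Supp}(B)=\bigcup_{\bm{x}\in B}\mathrm{supp}(\bm{x})$. $C^\perp$ is the dual code with respect to the standard inner product and $d(C^\perp)$ is the minimum weight of a nonzero codeword of $C^\perp$. The covering dimension is $\gamma(C)=\infty$ if $\mathrm{Supp}(C)\neq E$, and otherwise $\gamma(C)$ is the least positive integer $r$ such that $C$ has an $r$-dimensional subspace $D$ with $\mathrm{Supp}(D)=E$. *)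

From HB Require Import structures.
From mathcomp Require Import all_boot all_order all_algebra all_field.
Set Implicit Arguments. Unset Strict Implicit. Unset Printing Implicit Defensive.
Import GRing.Theory.
Local Open Scope ring_scope.

(* Vectors of F^n are row vectors 'rV[F]_n; coordinates are indexed by 'I_n
   (E = {1,...,n} is represented as 'I_n = {0,...,n-1}).
   An [n,k] code is a subspace C : {vspace 'rV[F]_n} with \dim C = k. *)

Definition supp (F : finFieldType) (n : nat) (x : 'rV[F]_n) : {set 'I_n} :=
  [set i | x 0 i != 0].

Definition wt (F : finFieldType) (n : nat) (x : 'rV[F]_n) : nat := #|supp x|.

Definition Supp (F : finFieldType) (n : nat) (B : {vspace 'rV[F]_n}) : {set 'I_n} :=
  [set i | [exists x : 'rV[F]_n, (x \in B) && (x 0 i != 0)]].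

Definition dotp (F : finFieldType) (n : nat) (x y : 'rV[F]_n) : F :=
  \sum_(i < n) x 0 i * y 0 i.

Definition in_dual (F : finFieldType) (n : nat) (C : {vspace 'rV[F]_n}) (x : 'rV[F]_n) : Prop :=
  forall y : 'rV[F]_n, y \in C -> dotp x y = 0.

Definition dual_min_dist (F : finFieldType) (n : nat) (C : {vspace 'rV[F]_n}) (d : nat) : Prop :=
  (exists x : 'rV[F]_n, [/\ in_dual C x, x != 0 & wt x = d]) /\
  (forall x : 'rV[F]_n, in_dual C x -> x != 0 -> (d <= wt x)%N).

Definition covers_with (F : finFieldType) (n : nat) (C : {vspace 'rV[F]_n}) (r : nat) : Prop :=
  exists D : {vspace 'rV[F]_n}, [/\ (D <= C)%VS, \dim D = r & Supp D = setT].

(* gamma(C) = r (finite): Supp(C) = E and r is the least positive integer such that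
   C has an r-dimensional subspace of full support.  gamma(C) = infinity iff no such r. *)
Definition covering_dim (F : finFieldType) (n : nat) (C : {vspace 'rV[F]_n}) (r : nat) : Prop :=
  [/\ Supp C = setT, (0 < r)%N, covers_with C r &
      forall r' : nat, (0 < r')%N -> (r' < r)%N -> ~ covers_with C r'].

From HB Require Import structures.
From mathcomp Require Import all_boot all_order all_algebra all_field.
From mathcomp Require Import zify.
From Stdlib Require Import Classical.
Set Implicit Arguments. Unset Strict Implicit. Unset Printing Implicit Defensive.
Import GRing.Theory.
Local Open Scope ring_scope.

(* Write delta = m + 3. As d(C^perp) >= m + 3, the values of a codeword of C
   can be prescribed freely on any m + 2 coordinates.  Applied to C0, the
   codewords vanishing on m fixed coordinates form a space of dimension
   k0 - m separating the n - m other coordinates, so n - m <= q^(k0 - m).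
   In C, take a codeword equal to 1 on m + 1 coordinates: on average it
   vanishes on at most a 1/q fraction of the remaining n - m - 1, and each of
   k0 - m - 1 further codewords chosen greedily divides the number of common
   zeros by q.  As n - m - 1 < q^(k0 - m), these k0 - m <= k - delta + 2
   codewords have no common zero, hence span a subcode of full support. *)

Section Interpolation.
Variables (F : finFieldType) (n : nat) (C : {vspace 'rV[F]_n}).

Definition unit_interpolation (s : seq 'I_n) (U : 'I_n -> 'rV[F]_n) : Prop :=
  forall j, j \in s -> U j \in C /\ forall m, m \in s -> U j 0 m = (m == j)%:R.

Section Combination.
Variables (s : seq 'I_n) (U : 'I_n -> 'rV[F]_n).
Hypotheses (uniq_s : uniq s) (interpU : unit_interpolation s U).

Lemma interpolation_in (a : 'I_n -> F) : \sum_(m <- s) a m *: U m \in C.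
Proof.
by rewrite big_seq; apply: memv_suml => m ms; apply: memvZ; case: (interpU ms).
Qed.

Lemma interpolationE (a : 'I_n -> F) j :
  j \in s -> (\sum_(m <- s) a m *: U m) 0 j = a j.
Proof.
move=> js; rewrite summxE big_uniq //= (bigD1 j) //= mxE.
rewrite (proj2 (interpU js) j js) eqxx mulr1 big1 ?addr0 // => m /andP [ms mj].
by rewrite mxE (proj2 (interpU ms) j js) eq_sym (negbTE mj) mulr0.
Qed.

Lemma in_dual_interpolation_defect l :
  (forall c, c \in C -> (forall m, m \in s -> c 0 m = 0) -> c 0 l = 0) ->
  in_dual C (\row_i ((i == l)%:R - (i \in s)%:R * U i 0 l)).
Proof.
move=> vanish y yC.
set z := y - \sum_(m <- s) y 0 m *: U m.
have zC : z \in C by rewrite memvB // interpolation_in.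
have /eqP : z 0 l = 0.
  by apply: vanish => // m ms; rewrite !mxE interpolationE // subrr.
rewrite !mxE summxE subr_eq0 => /eqP yl.
rewrite /dotp; under eq_bigr => i _ do rewrite mxE mulrBl.
rewrite sumrB (bigD1 l) //= eqxx mul1r big1 ?addr0; last first.
  by move=> i /negbTE ->; rewrite mul0r.
rewrite yl big_uniq // [X in _ - X](bigID (mem s)) /= [X in _ - (_ + X)]big1.
  rewrite addr0; apply/eqP; rewrite subr_eq0; apply/eqP/eq_bigr => i ->.
  by rewrite mul1r mxE mulrC.
by move=> i /negbTE ->; rewrite !mul0r.
Qed.

End Combination.

Variable d : nat.
Hypothesis dual_wt_ge : forall x, in_dual C x -> x != 0 -> (d <= wt x)%N.

Lemma exists_vanishing_codeword s U l :
  uniq s -> l \notin s -> ((size s).+1 < d)%N -> unit_interpolation s U ->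
  exists2 w, w \in C & (forall m, m \in s -> w 0 m = 0) /\ w 0 l = 1.
Proof.
move=> us ls s_lt interpU.
have [[c [cC cs cl]] | no_c] := classic
    (exists c, [/\ c \in C, forall m, m \in s -> c 0 m = 0 & c 0 l != 0]).
  exists ((c 0 l)^-1 *: c); first exact: memvZ.
  by split=> [m ms|]; rewrite mxE ?(cs m ms) ?mulr0 ?mulVf.
exfalso; pose x : 'rV[F]_n := \row_i ((i == l)%:R - (i \in s)%:R * U i 0 l).
have x_dual : in_dual C x.
  apply: in_dual_interpolation_defect => // c cC cs.
  by case: (c 0 l =P 0) => // /eqP cl; case: no_c; exists c.
have x0 : x != 0.
  apply/eqP => /(congr1 (fun M : 'rV[F]_n => M 0 l)).
  by rewrite !mxE eqxx (negbTE ls) mul0r subr0 => /eqP; rewrite oner_eq0.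
have : (wt x <= size (l :: s))%N.
  have /card_uniqP <- : uniq (l :: s) by rewrite /= ls us.
  rewrite /wt -cardsE; apply: subset_leq_card; apply/subsetP => i.
  rewrite !inE mxE; case: (i =P l) => [-> //|_] /=.
  by case: (i \in s) => //; rewrite mul0r subr0 eqxx.
by move=> wt_le; have := leq_trans (dual_wt_ge x_dual x0) wt_le; rewrite leqNgt s_lt.
Qed.

Lemma interpolation s : uniq s -> (size s < d)%N -> exists U, unit_interpolation s U.
Proof.
elim: s => [|l s IH] /=; first by exists (fun=> 0).
move=> /andP [ls us] s_lt; have [U interpU] := IH us (ltnW s_lt).
have [w wC [ws wl]] := exists_vanishing_codeword us ls s_lt interpU.
exists (fun j => if j == l then w else U j - U j 0 l *: w) => j.
rewrite inE; case: (j =P l) => [->|jl] /= js.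
  by split=> // m; rewrite inE; case: (m =P l) => [->|_ /= /ws].
have [UC Us] := interpU j js; split; first by rewrite memvB ?memvZ.
move=> m; rewrite inE !mxE; case: (m =P l) => [->|_] /=.
  by rewrite wl mulr1 subrr; case: (l =P j) => // lj; rewrite lj js in ls.
by move=> ms; rewrite ws // mulr0 subr0 Us.
Qed.

Lemma exists_codeword_nonzero_at i : (1 < d)%N -> exists2 c, c \in C & c 0 i != 0.
Proof.
move=> d_gt1; have [U interpU] := @interpolation [:: i] erefl d_gt1.
have [UC Ui] := interpU i (mem_head _ _).
by exists (U i); rewrite // Ui ?mem_head // eqxx oner_eq0.
Qed.

End Interpolation.

Lemma card_notin_seq n (s : seq 'I_n) :
  uniq s -> #|[set i | i \notin s]| = (n - size s)%N.
Proof.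
move=> us; have <- : #|~: [set i | i \notin s]| = size s.
  by rewrite -(card_uniqP us); apply: eq_card => i; rewrite !inE negbK.
by have := cardsC [set i | i \notin s]; rewrite card_ord; lia.
Qed.

Section Separation.
Variables (F : finFieldType) (n : nat).

Lemma card_separated_coords (V : {vspace 'rV[F]_n}) (I : {set 'I_n}) :
  {in I &, forall i j, i != j -> exists2 v, v \in V & v 0 i != v 0 j} ->
  (#|I| <= #|F| ^ \dim V)%N.
Proof.
move=> sep; pose col i : 'rV[F]_(\dim V) := \row_a (vbasis V)`_a 0 i.
have col_inj : {in I &, injective col}.
  move=> i j iI jI col_ij; apply/eqP/negPn/negP => /(sep i j iI jI) [v vV].
  rewrite (coord_vbasis vV) !summxE; apply/negP/negPn/eqP/eq_bigr => a _.
  by have := congr1 (fun M : 'rV_(\dim V) => M 0 a) col_ij; rewrite !mxE => ->.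
rewrite -(card_in_imset col_inj); apply: leq_trans (max_card _) _.
by rewrite card_mx mul1n.
Qed.

Definition coord_proj m (w : 'I_m -> 'I_n) : 'Hom('rV[F]_n, 'rV[F]_m) :=
  linfun (colsub w).

Lemma coord_projE m (w : 'I_m -> 'I_n) x l : coord_proj w x 0 l = x 0 (w l).
Proof. by rewrite lfunE /= mxE. Qed.

Lemma dim_ker_coord_proj (C : {vspace 'rV[F]_n}) m (w : 'I_m -> 'I_n) U :
  injective w -> unit_interpolation C (map w (enum 'I_m)) U ->
  (\dim (C :&: lker (coord_proj w)) + m)%N = \dim C.
Proof.
move=> w_inj interpU; set s := map w (enum _) in interpU.
have us : uniq s by rewrite map_inj_uniq ?enum_uniq.
have ws l : w l \in s by rewrite map_f ?mem_enum.
rewrite -(limg_ker_dim (coord_proj w) C); congr (_ + _)%N.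
suff -> : (coord_proj w @: C)%VS = fullv by rewrite dimvf /dim /= mul1n.
apply/eqP; rewrite eqEsubv subvf /=; apply/subvP => y _.
have -> : y = coord_proj w (\sum_(l < m) y 0 l *: U (w l)).
  apply/rowP => l; rewrite coord_projE summxE (bigD1 l) //= mxE.
  rewrite (proj2 (interpU _ (ws l)) _ (ws l)) eqxx mulr1 big1 ?addr0 // => l' l'l.
  rewrite mxE (proj2 (interpU _ (ws l')) _ (ws l)) (inj_eq w_inj) eq_sym.
  by rewrite (negbTE l'l) mulr0.
by rewrite memv_img // memv_suml // => l _; rewrite memvZ //; case: (interpU _ (ws l)).
Qed.

End Separation.

Lemma card_set_cond_sum (T : finType) (A : {set T}) (P : pred T) :
  #|[set x in A | P x]| = (\sum_(x in A) P x)%N.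
Proof.
rewrite -sum1dep_card big_mkcond [RHS]big_mkcond; apply: eq_bigr => x _.
by case: (x \in A); case: (P x).
Qed.

Section ZeroCounting.
Variables (F : finFieldType) (n : nat).
Implicit Types (X : {set 'rV[F]_n}) (U : {set 'I_n}) (c : 'rV[F]_n).

Definition zeros_in U c : {set 'I_n} := [set i in U | c 0%R i == 0%R].

Definition translation_closed X c0 := forall c a, c \in X -> c + a *: c0 \in X.

(* [(a, c) |-> c + a c0] embeds [F * {c in X | c_i = 0}] into [X]. *)
Lemma card_zero_fiber_le X i c0 :
  c0 0 i != 0 -> translation_closed X c0 ->
  (#|F| * #|[set c in X | c 0%R i == 0%R]| <= #|X|)%N.
Proof.
move=> c0i X_closed; rewrite -cardsT -cardsX.
set Z := setX _ _; pose shift (p : F * 'rV[F]_n) := p.2 + p.1 *: c0.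
have shift_inj : {in Z &, injective shift}.
  move=> [a c] [a' c']; rewrite !inE /= => /andP [_ /eqP ci] /andP [_ /eqP c'i] eq_ac.
  have aa' : a = a'.
    have := congr1 (fun M : 'rV[F]_n => M 0 i) eq_ac.
    by rewrite !mxE ci c'i !add0r => /(mulIf c0i).
  by move: eq_ac; rewrite /shift /= aa' => /addIr ->.
rewrite -(card_in_imset shift_inj); apply/subset_leq_card/subsetP => y.
by case/imsetP => -[a c]; rewrite !inE /= => /andP [cX _] ->; apply: X_closed.
Qed.

(* Double counting: on average over [X] a coordinate of [U] vanishes with
   frequency at most [1/q]. *)
Lemma exists_few_zeros X U :
  X != set0 ->
  (forall i, i \in U -> exists2 c0 : 'rV[F]_n, c0 0 i != 0 & translation_closed X c0) ->
  exists2 c, c \in X & (#|F| * #|zeros_in U c| <= #|U|)%N.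
Proof.
move=> X_neq0 U_cover.
have double_count : (#|F| * \sum_(c in X) #|zeros_in U c| <= #|U| * #|X|)%N.
  under eq_bigr => c _ do rewrite card_set_cond_sum.
  rewrite exchange_big /= big_distrr /= -sum_nat_const; apply: leq_sum => i iU.
  have [c0 c0i X_closed] := U_cover i iU.
  by rewrite -card_set_cond_sum; apply: card_zero_fiber_le c0i X_closed.
apply/exists_inP; apply: contraLR double_count => /exists_inPn many_zeros.
rewrite -ltnNge mulnC -sum_nat_const big_distrr /=.
have [c cX] := set0Pn _ X_neq0.
rewrite (bigD1 c) // [X in (_ < X)%N](bigD1 c) //= -addSn leq_add ?ltnNge ?many_zeros //.
by apply: leq_sum => c' /andP [c'X _]; apply: ltnW; rewrite ltnNge many_zeros.
Qed.

Lemma exists_few_common_zeros (C : {vspace 'rV[F]_n}) U l :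
  (forall i, exists2 c, c \in C & c 0 i != 0) ->
  exists cs : seq 'rV[F]_n, [/\ size cs = l, all (mem C) cs &
    (#|F| ^ l * #|[set i in U | all (fun c => c 0%R i == 0%R) cs]| <= #|U|)%N].
Proof.
move=> C_full; elim: l U => [|l IH] U.
  exists [::]; split=> //; rewrite mul1n; apply/subset_leq_card/subsetP => i.
  by rewrite inE => /andP [].
have [c cC c_zeros] : exists2 c, c \in C & (#|F| * #|zeros_in U c| <= #|U|)%N.
  have [|i _|c] := @exists_few_zeros [set c | c \in C] U; last by rewrite inE; exists c.
    by apply/set0Pn; exists 0; rewrite inE mem0v.
  have [c0 c0C c0i] := C_full i; exists c0 => // c a.
  by rewrite !inE => cC; rewrite memvD ?memvZ.
have [cs [size_cs cs_C cs_zeros]] := IH (zeros_in U c).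
exists (c :: cs); split; rewrite /= ?size_cs ?cs_C ?andbT //.
rewrite expnS -mulnA; apply: leq_trans c_zeros; rewrite leq_mul2l.
apply/orP; right; apply: leq_trans cs_zeros; rewrite leq_mul2l; apply/orP; right.
by apply/subset_leq_card/subsetP => i; rewrite !inE andbA.
Qed.

End ZeroCounting.

Section DualDistance.
Variables (F : finFieldType) (n : nat) (C : {vspace 'rV[F]_n}) (m : nat).
Hypothesis dual_wt_ge : forall x, in_dual C x -> x != 0 -> (m.+3 <= wt x)%N.

Lemma card_coords_le_dim (m_le_n : (m <= n)%N) : (n - m <= #|F| ^ (\dim C - m))%N.
Proof.
pose w := widen_ord m_le_n; have w_inj : injective w by move=> a b /(congr1 val) /= /val_inj.
pose s := map w (enum 'I_m).
have us : uniq s by rewrite map_inj_uniq ?enum_uniq.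
have size_s : size s = m by rewrite size_map size_enum_ord.
have [U interpU] : exists U, unit_interpolation C s U.
  by apply: (interpolation dual_wt_ge us); rewrite size_s; lia.
have := dim_ker_coord_proj w_inj interpU.
set V := (C :&: lker _)%VS => dimV.
rewrite (_ : (\dim C - m)%N = \dim V); last by lia.
rewrite -size_s -card_notin_seq //; apply: card_separated_coords => i j.
rewrite !inE => iNs jNs ij.
have uijs : uniq [:: i, j & s] by rewrite /= inE negb_or ij iNs jNs us.
have [U' interpU'] : exists U', unit_interpolation C [:: i, j & s] U'.
  by apply: (interpolation dual_wt_ge uijs); rewrite /= size_s.
have [U'C U'E] := interpU' i (mem_head _ _).
exists (U' i); last by rewrite !U'E ?inE ?eqxx ?orbT // (eq_sym j) (negbTE ij) oner_eq0.
rewrite memv_cap U'C memv_ker; apply/eqP/rowP => l.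
rewrite coord_projE mxE U'E; last by rewrite !inE map_f ?mem_enum ?orbT.
by case: eqP => // wl; rewrite -wl map_f ?mem_enum in iNs.
Qed.

(* The codewords equal to [1] on [T] form a coset of those vanishing on [T],
   which is what makes averaging possible. *)
Lemma exists_codeword_one_on T :
  uniq T -> size T = m.+1 ->
  exists2 c, (c \in C) && all (fun t => c 0 t == 1) T &
    (#|F| * #|zeros_in [set i | i \notin T] c| <= #|[set i | i \notin T]|)%N.
Proof.
move=> uT size_T; have [UT interpT] : exists U, unit_interpolation C T U.
  by apply: (interpolation dual_wt_ge uT); rewrite size_T.
have [|i|c] := @exists_few_zeros _ _ [set c | (c \in C) && all (fun t => c 0 t == 1) T]
  [set i | i \notin T].
- apply/set0Pn; exists (\sum_(t <- T) 1 *: UT t); rewrite inE interpolation_in //=.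
  by apply/allP => t tT; rewrite (interpolationE uT interpT).
- rewrite inE => iT; have [V interpV] : exists V, unit_interpolation C (i :: T) V.
    by apply: (interpolation dual_wt_ge); rewrite /= ?iT ?uT ?size_T.
  have [VC VE] := interpV i (mem_head _ _).
  exists (V i); first by rewrite VE ?mem_head // eqxx oner_eq0.
  move=> c a; rewrite !inE => /andP [cC /allP cT]; rewrite memvD ?memvZ //=.
  apply/allP => t tT; rewrite !mxE (eqP (cT t tT)) VE ?inE ?tT ?orbT //.
  by rewrite (_ : (t == i) = false) ?mulr0 ?addr0 //; apply: contraNF iT => /eqP <-.
- by rewrite inE; exists c.
Qed.

Lemma exists_hitting_codewords r :
  (m < n)%N -> (0 < r)%N -> (n - m.+1 < #|F| ^ r)%N ->
  exists cs : seq 'rV[F]_n, [/\ size cs = r, all (mem C) cs &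
    forall i, has (fun c : 'rV[F]_n => c 0 i != 0) cs].
Proof.
move=> mn r_gt0 n_lt; pose T := take m.+1 (enum 'I_n).
have uT : uniq T by rewrite take_uniq ?enum_uniq.
have size_T : size T = m.+1 by rewrite size_takel ?size_enum_ord.
have [c1 /andP [c1C /allP c1T] c1_zeros] := exists_codeword_one_on uT size_T.
have C_full i : exists2 c, c \in C & c 0 i != 0.
  exact: (exists_codeword_nonzero_at dual_wt_ge).
have [cs [size_cs cs_C]] :=
  exists_few_common_zeros (zeros_in [set i | i \notin T] c1) r.-1 C_full.
set Z := [set i in _ | _] => cs_zeros.
have Z0 : Z = set0.
  apply/eqP; rewrite -cards_eq0 -leqn0 leqNgt; apply/negP => Z_gt0.
  have : (#|F| ^ r * #|Z| <= #|[set i | i \notin T]|)%N.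
    rewrite -(prednK r_gt0) expnS -mulnA; apply: leq_trans c1_zeros.
    by rewrite leq_mul2l cs_zeros orbT.
  apply/negP; rewrite -ltnNge card_notin_seq // size_T.
  exact: leq_trans n_lt (leq_pmulr _ Z_gt0).
exists (c1 :: cs); split; rewrite /= ?size_cs ?prednK ?c1C // => i.
case: (boolP (c1 0 i == 0)) => c1i //=.
have iT : i \notin T by apply: contraL c1i => /c1T /eqP ->; rewrite oner_eq0.
apply/negPn/negP; rewrite -all_predC => cs_i.
have : i \in Z by rewrite /Z /zeros_in !inE iT c1i; apply: sub_all cs_i => c /negPn.
by rewrite Z0 inE.
Qed.

End DualDistance.

Section Covering.
Variables (F : finFieldType) (n : nat) (C : {vspace 'rV[F]_n}).

Lemma covers_with_span (cs : seq 'rV[F]_n) :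
  (0 < n)%N -> all (mem C) cs ->
  (forall i, has (fun c : 'rV[F]_n => c 0 i != 0) cs) ->
  (0 < \dim <<cs>>)%N /\ covers_with C (\dim <<cs>>).
Proof.
move=> n_gt0 cs_C cs_hit; split.
  have /hasP [c c_cs c0] := cs_hit (Ordinal n_gt0).
  rewrite lt0n dimv_eq0; apply: contraTneq (memv_span c_cs) => ->.
  by rewrite memv0; apply: contraNneq c0 => ->; rewrite mxE.
exists <<cs>>%VS; split=> //; first by apply/span_subvP => c /(allP cs_C).
apply/setP => i; rewrite !inE; have /hasP [c c_cs ci] := cs_hit i.
by apply/existsP; exists c; rewrite memv_span.
Qed.

Lemma covering_dim_le r :
  (0 < r)%N -> covers_with C r -> exists2 r', covering_dim C r' & (r' <= r)%N.
Proof.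
elim/ltn_ind: r => r IH r_gt0 C_r.
have [[r' [r'_gt0 r'_lt C_r']] | r_min] :=
  classic (exists r', [/\ (0 < r')%N, (r' < r)%N & covers_with C r']).
  have [r'' C_r'' r''_le] := IH r' r'_lt r'_gt0 C_r'.
  by exists r''; last exact: leq_trans r''_le (ltnW r'_lt).
exists r => //; split=> // [|r' r'_gt0 r'_lt C_r']; last by apply: r_min; exists r'.
case: C_r => D [DC _ D_supp]; apply/setP => i; rewrite !inE.
have := in_setT i; rewrite -D_supp inE => /existsP [x /andP [xD xi]].
by apply/existsP; exists x; rewrite xi (subvP DC).
Qed.

End Covering.

Theorem mainTheorem14 (F : finFieldType) (n k0 delta : nat)
  (C0 : {vspace 'rV[F]_n}) (hC0dim : \dim C0 = k0)
  (hC0 : dual_min_dist C0 delta) (hdelta : (3 <= delta)%N)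
  (k : nat) (C : {vspace 'rV[F]_n}) (hCdim : \dim C = k)
  (hC : dual_min_dist C delta) (hk : (k0 < k)%N) :
  exists r : nat, covering_dim C r /\ (r + delta <= k + 2)%N.
Proof.
have [m def_delta] : exists m, delta = m.+3 by exists (delta - 3)%N; lia.
subst delta; have [[x [_ _ wt_x]] C0_wt_ge] := hC0; have [_ C_wt_ge] := hC.
have n_ge : (m.+3 <= n)%N.
  by rewrite -wt_x; apply: leq_trans (max_card _) _; rewrite card_ord.
have m_lt_n : (m < n)%N by lia.
have := card_coords_le_dim C0_wt_ge (ltnW m_lt_n); rewrite hC0dim => n_le.
have r_gt0 : (0 < k0 - m)%N.
  by rewrite lt0n; apply: contraTneq n_le => ->; rewrite expn0; lia.
have n_lt : (n - m.+1 < #|F| ^ (k0 - m))%N by lia.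
have [cs [size_cs cs_C cs_hit]] := exists_hitting_codewords C_wt_ge m_lt_n r_gt0 n_lt.
have [D_gt0 C_D] := covers_with_span (leq_ltn_trans (leq0n m) m_lt_n) cs_C cs_hit.
have [r C_r r_le] := covering_dim_le D_gt0 C_D.
exists r; split=> //; have := dim_span cs; rewrite size_cs; lia.
Qed.
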